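(* Let $I\subset S$ be a proper graded ideal and let $f\in S$ be a homogeneous element with $f\notin I$. Then $\mathrm{v}(I)\le\mathrm{v}(I:f)+\deg(f)$.
   Context: $S=K[x_1,\dots,x_n]$ is a standard graded polynomial ring over a field $K$, $S_d$ its degree-$d$ component. For a proper graded ideal $J\subset S$, $\mathrm{v}(J)=\min\{d:\exists f\in S_d\text{ with }(J:f)\in\operatorname{Ass}(J)\}$. *)

From mathcomp Require Import all_boot all_algebra.
From mathcomp Require Import mpoly.
Set Implicit Arguments. Unset Strict Implicit. Unset Printing Implicit Defensive.
Import GRing.Theory.
Local Open Scope ring_scope.

Definition mset (n : nat) (K : fieldType) := {mpoly K[n]} -> Prop.

Definition is_ideal (n : nat) (K : fieldType) (J : mset n K) : Prop :=
  [/\ J 0,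
      (forall p q, J p -> J q -> J (p + q)) &
      (forall r p, J p -> J (r * p))].

Definition is_proper (n : nat) (K : fieldType) (J : mset n K) : Prop := ~ J 1.

Definition is_graded_ideal (n : nat) (K : fieldType) (J : mset n K) : Prop :=
  is_ideal J /\ forall p (d : nat), J p -> J (pihomog mdeg d p).

Definition is_prime_ideal (n : nat) (K : fieldType) (P : mset n K) : Prop :=
  [/\ is_ideal P, is_proper P & forall a b, P (a * b) -> P a \/ P b].

Definition colon (n : nat) (K : fieldType) (J : mset n K) (f : {mpoly K[n]})
  : mset n K := fun g => J (g * f).

Definition Ass (n : nat) (K : fieldType) (J : mset n K) (P : mset n K) : Prop :=
  is_prime_ideal P /\ exists g : {mpoly K[n]}, forall x, P x <-> colon J g x.

(* P \in Ass(J) up to extensional equality of sets. *)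
Definition in_Ass (n : nat) (K : fieldType) (J : mset n K) (P : mset n K) : Prop :=
  exists Q, Ass J Q /\ forall x, P x <-> Q x.

Definition v_set (n : nat) (K : fieldType) (J : mset n K) (d : nat) : Prop :=
  exists f : {mpoly K[n]}, f \is d.-homog /\ in_Ass J (colon J f).

(* is_v J d  <->  v(J) = d, i.e. d is the minimum of v_set J. *)
Definition is_v (n : nat) (K : fieldType) (J : mset n K) (d : nat) : Prop :=
  v_set J d /\ forall d', v_set J d' -> (d <= d')%N.

From mathcomp Require Import all_boot all_algebra.
From mathcomp Require Import mpoly.
Set Implicit Arguments. Unset Strict Implicit. Unset Printing Implicit Defensive.
Import GRing.Theory.
Local Open Scope ring_scope.

(* Colon ideals compose: ((J : f) : g) = (J : g f).  Hence every
   associated prime (J : f) : h of (J : f) is also the associated prime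
   J : (h f) of J, i.e. Ass(J : f) is contained in Ass(J).  Now take a
   homogeneous g of degree v(I : f) with ((I : f) : g) in Ass(I : f); then
   g f is homogeneous of degree v(I : f) + deg f, and (I : g f) = ((I : f) : g)
   lies in Ass(I).  By minimality of v(I) we get v(I) <= v(I : f) + deg f. *)

Section ColonIdeals.

Variables (n : nat) (K : fieldType).
Implicit Types (J P : mset n K) (f g : {mpoly K[n]}).

Lemma colonM J f g x : colon (colon J f) g x <-> colon J (g * f) x.
Proof. by rewrite /colon mulrA. Qed.

Lemma Ass_colon J f P : Ass (colon J f) P -> Ass J P.
Proof.
move=> [primeP [h defP]]; split=> //; exists (h * f) => x.
by rewrite defP colonM.
Qed.

Lemma in_Ass_colon J f P : in_Ass (colon J f) P -> in_Ass J P.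
Proof. by move=> [Q [AssQ eqPQ]]; exists Q; split=> //; apply: Ass_colon AssQ. Qed.

Lemma v_set_colon J f e d :
  f \is e.-homog -> v_set (colon J f) d -> v_set J (d + e).
Proof.
move=> homf [g [homg AssJfg]]; exists (g * f); split; first exact: dhomogM.
apply: (in_Ass_colon (f := f)); case: AssJfg => [Q [AssQ eqQ]].
by exists Q; split=> // x; rewrite -eqQ colonM.
Qed.

End ColonIdeals.

Theorem proposition4p3 (n : nat) (K : fieldType) (I : mset n K)
  (f : {mpoly K[n]}) (e : nat) (vI vIf : nat) :
  is_graded_ideal I -> is_proper I ->
  f \is e.-homog -> ~ I f ->
  is_v I vI -> is_v (colon I f) vIf ->
  (vI <= vIf + e)%N.
Proof.
move=> _ _ homf _ [_ vI_min] [vIf_attained _].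
exact: vI_min (v_set_colon homf vIf_attained).
Qed.
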